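(* Let $\mathbf A$ be an interior $r\ell u$-groupoid and $\mathbf B$ a partial subalgebra of $\mathbf A$. Then the map $b\mapsto\{(\mathrm{id},b)\}^{\lhd}$ from $B$ to the universe of $\mathbf F^+_{\mathbf A,\mathbf B}$ is an embedding of the partial algebra $\mathbf B$ into $\mathbf F^+_{\mathbf A,\mathbf B}$. The same holds if $\mathbf A$ is an interior $r\ell uz$-groupoid and $0^{\mathbf A}\in B$, where $\mathbf F_{\mathbf A,\mathbf B}$ is taken as an enriched $ruz$-frame with $\epsilon=(\mathrm{id},0^{\mathbf A})$.
   Context: An $r\ell u$-groupoid is an algebra $(A,\wedge,\vee,\cdot,\backslash,/,1)$ with $(A,\wedge,\vee)$ a lattice (order $\le$), $(A,\cdot,1)$ a unital groupoid (binary operation, not necessarily associative, with two-sided unit $1$), and $x\cdot y\le z\iff y\le x\backslash z\iff x\le z/y$; an $r\ell uz$-groupoid additionally has an arbitrary constant $0$. An interior one has a unary $!$ with $1\le !1$, $!x\cdot!y\le !(x\cdot y)$, $!x\le x$, $!x\le !!x$, $x\le y\Rightarrow !x\le !y$. A partial subalgebra $\mathbf B$ of $\mathbf A$ is a subset $B$ with $f^{\mathbf B}(\vec b)=f^{\mathbf A}(\vec b)$ if this lies in $B$, undefined otherwise. An embedding of a partial algebra $\mathbf B$ into an algebra $\mathbf D$ is an injective map $h$ with $h(f^{\mathbf B}(\vec b))=f^{\mathbf D}(h(\vec b))$ whenever the left side is defined. Enriched $ru$-frame: $(G,T,N,K)$ with $(G,\cdot,\varepsilon)$ a unital groupoid,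 $T$ a set, $N\subseteq G\times T$ nuclear (for all $x,y\in G,z\in T$ there are $x\backslash\!\!\backslash z, z/\!\!/y\in T$ with $x\cdot y\,N\,z\iff y\,N\,x\backslash\!\!\backslash z\iff x\,N\,z/\!\!/y$), $K$ a sub-unital-groupoid of $G$; an enriched $ruz$-frame additionally has $\epsilon\in T$. $X^{\rhd}=\{t\mid\forall x\in X\,xNt\}$, $Y^{\lhd}=\{g\mid\forall y\in Y\,gNy\}$, $\gamma_N(X)=X^{\rhd\lhd}$. $\mathbf F^+$: universe the closed sets ($\gamma_N(X)=X$), $X\wedge Y=X\cap Y$, $X\vee Y=\gamma_N(X\cup Y)$, $X\cdot Y=\gamma_N(X\circ Y)$ with $X\circ Y=\{x\cdot y\}$, $X\backslash Y=\{z\mid X\circ\{z\}\subseteq Y\}$, $Y/X=\{z\mid \{z\}\circ X\subseteq Y\}$, $!X=\gamma_N(X\cap K)$, unit $\gamma_N(\{\varepsilon\})$, and in the $ruz$ case zero $\{\epsilon\}^{\lhd}$. $\mathbf F_{\mathbf A,\mathbf B}=(G_B,T_B,N_B,K_B)$: $G_B$ the sub-unital-groupoid of $(A,\cdot,1)$ generated by $B$; $U_{G_B}$ the unary linear polynomials over $G_B$ (maps given by a groupoid term with one variable occurring exactly once and other leaves in $G_B$, including $\mathrm{id}$); $T_B=U_{G_B}\times B$; $x\,N_B\,(u,b)$ iff $u(x)\le^{\mathbf A}b$; $K_B$ the sub-unital-groupoid generated by $\{!^{\mathbf A}b\mid b\in B,\ !^{\mathbf A}b\in B\}$. *)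

Set Implicit Arguments.

Record IRLU := {
  car :> Type;
  meet : car -> car -> car;
  join : car -> car -> car;
  mul  : car -> car -> car;
  ldiv : car -> car -> car;
  rdiv : car -> car -> car;
  one  : car;
  bang : car -> car;
  meet_assoc : forall x y z, meet x (meet y z) = meet (meet x y) z;
  join_assoc : forall x y z, join x (join y z) = join (join x y) z;
  meet_comm  : forall x y, meet x y = meet y x;
  join_comm  : forall x y, join x y = join y x;
  meet_absorb : forall x y, meet x (join x y) = x;
  join_absorb : forall x y, join x (meet x y) = x;
  mul_1l : forall x, mul one x = x;
  mul_1r : forall x, mul x one = x;
  (* residuation, with x <= y := meet x y = x *)
  res_l : forall x y z, meet (mul x y) z = mul x y <-> meet y (ldiv x z) = y;
  res_r : forall x y z, meet (mul x y) z = mul x y <-> meet x (rdiv z y) = x;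
  bang_one : meet one (bang one) = one;
  bang_mul : forall x y, meet (mul (bang x) (bang y)) (bang (mul x y)) = mul (bang x) (bang y);
  bang_defl : forall x, meet (bang x) x = bang x;
  bang_idem : forall x, meet (bang x) (bang (bang x)) = bang x;
  bang_mono : forall x y, meet x y = x -> meet (bang x) (bang y) = bang x
}.

Definition le (A : IRLU) (x y : A) : Prop := meet A x y = x.

Section Frame.
Variables (A : IRLU) (B : A -> Prop).

Inductive inG : A -> Prop :=
| inG_B : forall b, B b -> inG b
| inG_one : inG (one A)
| inG_mul : forall x y, inG x -> inG y -> inG (mul A x y).

Inductive inK : A -> Prop :=
| inK_gen : forall b, B b -> B (bang A b) -> inK (bang A b)
| inK_one : inK (one A)
| inK_mul : forall x y, inK x -> inK y -> inK (mul A x y).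

(** unary linear polynomials: groupoid terms with exactly one occurrence of
    the variable; the subterms not containing the variable are represented by
    their values, which are exactly the elements of G_B *)
Inductive upoly : Type :=
| PHole : upoly
| PMulL : A -> upoly -> upoly
| PMulR : upoly -> A -> upoly.

Fixpoint peval (u : upoly) (x : A) : A :=
  match u with
  | PHole => x
  | PMulL a v => mul A a (peval v x)
  | PMulR v a => mul A (peval v x) a
  end.

Fixpoint pvalid (u : upoly) : Prop :=
  match u with
  | PHole => True
  | PMulL a v => inG a /\ pvalid v
  | PMulR v a => pvalid v /\ inG a
  end.

Definition inT (t : upoly * A) : Prop := pvalid (fst t) /\ B (snd t).

Definition NB (x : A) (t : upoly * A) : Prop := @le A (peval (fst t) x) (snd t).

Definition rhd (X : A -> Prop) : upoly * A -> Prop :=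
  fun t => inT t /\ forall x, inG x -> X x -> NB x t.
Definition lhd (Y : upoly * A -> Prop) : A -> Prop :=
  fun g => inG g /\ forall t, inT t -> Y t -> NB g t.
Definition gammaN (X : A -> Prop) : A -> Prop := lhd (rhd X).

Definition seteq (X Y : A -> Prop) : Prop := forall g, X g <-> Y g.

(** universe of F^+ : closed subsets of G_B *)
Definition closed (X : A -> Prop) : Prop :=
  (forall g, X g -> inG g) /\ seteq (gammaN X) X.

Definition meetF (X Y : A -> Prop) : A -> Prop := fun g => X g /\ Y g.
Definition joinF (X Y : A -> Prop) : A -> Prop := gammaN (fun g => X g \/ Y g).
Definition circ (X Y : A -> Prop) : A -> Prop :=
  fun g => exists x y, X x /\ Y y /\ g = mul A x y.
Definition mulF (X Y : A -> Prop) : A -> Prop := gammaN (circ X Y).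
Definition ldivF (X Y : A -> Prop) : A -> Prop :=
  fun z => inG z /\ forall x, X x -> Y (mul A x z).
Definition rdivF (Y X : A -> Prop) : A -> Prop :=
  fun z => inG z /\ forall x, X x -> Y (mul A z x).
Definition bangF (X : A -> Prop) : A -> Prop := gammaN (fun g => X g /\ inK g).
Definition oneF : A -> Prop := gammaN (fun g => g = one A).
(** zero of F^+ in the ruz case, with epsilon = (id, z) *)
Definition zeroF (z : A) : A -> Prop := lhd (fun t => t = (PHole, z)).

Definition emb (b : A) : A -> Prop := lhd (fun t => t = (PHole, b)).

(** emb is an embedding of the partial subalgebra B into F^+_{A,B}:
    values lie in the universe, injective on B, and it commutes with every
    operation whenever the partial operation of B is defined
    (i.e. the value in A lies in B). *)
Definition IsEmbedding : Prop :=
  (forall b, B b -> closed (emb b)) /\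
  (forall b c, B b -> B c -> seteq (emb b) (emb c) -> b = c) /\
  (forall b c, B b -> B c -> B (meet A b c) ->
     seteq (emb (meet A b c)) (meetF (emb b) (emb c))) /\
  (forall b c, B b -> B c -> B (join A b c) ->
     seteq (emb (join A b c)) (joinF (emb b) (emb c))) /\
  (forall b c, B b -> B c -> B (mul A b c) ->
     seteq (emb (mul A b c)) (mulF (emb b) (emb c))) /\
  (forall b c, B b -> B c -> B (ldiv A b c) ->
     seteq (emb (ldiv A b c)) (ldivF (emb b) (emb c))) /\
  (forall b c, B b -> B c -> B (rdiv A b c) ->
     seteq (emb (rdiv A b c)) (rdivF (emb b) (emb c))) /\
  (forall b, B b -> B (bang A b) ->
     seteq (emb (bang A b)) (bangF (emb b))) /\
  (B (one A) -> seteq (emb (one A)) oneF).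

Definition IsEmbeddingZ (z : A) : Prop :=
  IsEmbedding /\ seteq (emb z) (zeroF z).

End Frame.

(** Since (id,b) is a test for every b in B, the image {(id,b)}^◁ of b is the
    principal down-set of b within G_B, and the closure of any X lying below
    m in B stays below m.  Conversely the closure is downward closed, because
    unary linear polynomials are monotone.  Hence ↓m is the closure of X as
    soon as X lies below m and m belongs to the closure of X, and for each
    operation it remains to check the latter for its value in A: for the join
    because a unary linear polynomial, a composite of residuated maps,
    preserves binary joins, and for ! because the elements of K_B lie below
    their ! image. *)

From Stdlib Require Import Setoid.

Local Notation "x ≤ y" := (le _ x y) (at level 70).

Section Order.

Variable A : IRLU.
Implicit Types x y z : A.

Lemma meet_idem x : meet A x x = x.
Proof.
  pose proof (meet_absorb A x (meet A x x)) as H.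
  rewrite (join_absorb A x x) in H; exact H.
Qed.

Lemma le_refl x : x ≤ x.
Proof. apply meet_idem. Qed.

Lemma le_trans x y z : x ≤ y -> y ≤ z -> x ≤ z.
Proof. unfold le; intros Hxy Hyz. rewrite <- Hxy, <- meet_assoc, Hyz; reflexivity. Qed.

Lemma le_antisym x y : x ≤ y -> y ≤ x -> x = y.
Proof. unfold le; intros Hxy Hyx. rewrite <- Hxy, meet_comm; exact Hyx. Qed.

Lemma le_meet x y z : x ≤ meet A y z <-> x ≤ y /\ x ≤ z.
Proof.
  split.
  - intro H. split; eapply le_trans; try exact H; unfold le.
    + rewrite (meet_comm A (meet A y z) y), meet_assoc, meet_idem; reflexivity.
    + rewrite <- meet_assoc, meet_idem; reflexivity.
  - unfold le; intros [Hy Hz]. rewrite meet_assoc, Hy, Hz; reflexivity.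
Qed.

Lemma le_join_eq x y : x ≤ y -> join A x y = y.
Proof. unfold le; intro H. rewrite <- H, join_comm, meet_comm; apply join_absorb. Qed.

Lemma join_ub_l x y : x ≤ join A x y.
Proof. apply meet_absorb. Qed.

Lemma join_ub_r x y : y ≤ join A x y.
Proof. rewrite join_comm; apply join_ub_l. Qed.

Lemma join_lub x y z : x ≤ z -> y ≤ z -> join A x y ≤ z.
Proof.
  intros Hx Hy.
  assert (Hxyz : join A (join A x y) z = z).
  { rewrite <- join_assoc, (le_join_eq _ _ Hy), (le_join_eq _ _ Hx); reflexivity. }
  rewrite <- Hxyz; apply join_ub_l.
Qed.

Lemma mul_le_l x y z : mul A x y ≤ z <-> y ≤ ldiv A x z.
Proof. apply res_l. Qed.

Lemma mul_le_r x y z : mul A x y ≤ z <-> x ≤ rdiv A z y.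
Proof. apply res_r. Qed.

Lemma mul_mono x y x' y' : x ≤ x' -> y ≤ y' -> mul A x y ≤ mul A x' y'.
Proof.
  intros Hx Hy. apply le_trans with (mul A x' y).
  - apply mul_le_r, le_trans with x'; [exact Hx | apply mul_le_r, le_refl].
  - apply mul_le_l, le_trans with y'; [exact Hy | apply mul_le_l, le_refl].
Qed.

Lemma peval_mono (u : upoly A) x y : x ≤ y -> peval u x ≤ peval u y.
Proof.
  induction u; simpl; intro H; auto using mul_mono, le_refl.
Qed.

Lemma peval_join_le (u : upoly A) x y z :
  peval u x ≤ z -> peval u y ≤ z -> peval u (join A x y) ≤ z.
Proof.
  revert z; induction u as [| a u IH | u IH a]; simpl; intros z Hx Hy.
  - apply join_lub; assumption.
  - apply mul_le_l, IH; apply mul_le_l; assumption.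
  - apply mul_le_r, IH; apply mul_le_r; assumption.
Qed.

End Order.

Section Frame.

Variables (A : IRLU) (B : A -> Prop).
Implicit Types (X : A -> Prop) (b c d g m : A).

Lemma inK_le_bang k : inK A B k -> k ≤ bang A k.
Proof.
  induction 1.
  - apply bang_idem.
  - apply bang_one.
  - eapply le_trans; [apply mul_mono; eassumption | apply bang_mul].
Qed.

Lemma emb_iff {b g} : B b -> emb A B b g <-> inG A B g /\ g ≤ b.
Proof.
  intro Hb. unfold emb, lhd; split.
  - intros [HG H]. split; [exact HG |].
    apply (H (PHole A, b)); [split; simpl; auto | reflexivity].
  - intros [HG H]. split; [exact HG |]. intros t _ ->; exact H.
Qed.

Lemma emb_refl b : B b -> emb A B b b.
Proof. intro Hb. apply emb_iff; auto using le_refl, inG_B. Qed.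

Lemma gammaN_ext X g : X g -> inG A B g -> gammaN A B X g.
Proof. intros HX HG. split; [exact HG |]. intros t _ [_ H]; auto. Qed.

Lemma gammaN_down {X m g} : gammaN A B X m -> inG A B g -> g ≤ m -> gammaN A B X g.
Proof.
  intros [_ Hm] HG Hgm. split; [exact HG |].
  intros [u d] Ht Hrhd. eapply le_trans; [apply peval_mono, Hgm | exact (Hm _ Ht Hrhd)].
Qed.

Lemma gammaN_le {X m g} :
  B m -> (forall x, inG A B x -> X x -> x ≤ m) -> gammaN A B X g -> g ≤ m.
Proof.
  intros Hm Hbound [_ Hg]. apply (Hg (PHole A, m)); [split; simpl; auto |].
  split; [split; simpl; auto | exact Hbound].
Qed.

Lemma emb_gammaN X m :
  B m -> gammaN A B X m -> (forall x, inG A B x -> X x -> x ≤ m) ->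
  seteq A (emb A B m) (gammaN A B X).
Proof.
  intros Hm Hcl Hbound g. rewrite emb_iff by exact Hm. split.
  - intros [HG Hgm]. exact (gammaN_down Hcl HG Hgm).
  - intro Hg. split; [apply Hg | exact (gammaN_le Hm Hbound Hg)].
Qed.

Lemma emb_closed b : B b -> closed A B (emb A B b).
Proof.
  intro Hb. split.
  - intros g Hg. apply emb_iff in Hg; tauto.
  - intro g. symmetry. revert g. apply emb_gammaN; [exact Hb | |].
    + apply gammaN_ext; auto using emb_refl, inG_B.
    + intros x _ Hx. apply emb_iff in Hx; tauto.
Qed.

Lemma emb_inj b c : B b -> B c -> seteq A (emb A B b) (emb A B c) -> b = c.
Proof.
  intros Hb Hc H. apply le_antisym.
  - apply (emb_iff Hc), H, emb_refl, Hb.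
  - apply (emb_iff Hb), H, emb_refl, Hc.
Qed.

Lemma emb_meet b c : B b -> B c -> B (meet A b c) ->
  seteq A (emb A B (meet A b c)) (meetF A (emb A B b) (emb A B c)).
Proof.
  intros Hb Hc Hm g. unfold meetF.
  rewrite (emb_iff Hm), (emb_iff Hb), (emb_iff Hc), le_meet; tauto.
Qed.

Lemma emb_join b c : B b -> B c -> B (join A b c) ->
  seteq A (emb A B (join A b c)) (joinF A B (emb A B b) (emb A B c)).
Proof.
  intros Hb Hc Hj. apply emb_gammaN; [exact Hj | |].
  - split; [constructor; exact Hj |].
    intros [u d] _ [_ Ht]. unfold NB; simpl.
    apply peval_join_le; apply Ht; auto using inG_B, emb_refl.
  - intros x _ [Hx | Hx].
    + apply (emb_iff Hb) in Hx as [_ Hx]. eapply le_trans; [exact Hx | apply join_ub_l].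
    + apply (emb_iff Hc) in Hx as [_ Hx]. eapply le_trans; [exact Hx | apply join_ub_r].
Qed.

Lemma emb_mul b c : B b -> B c -> B (mul A b c) ->
  seteq A (emb A B (mul A b c)) (mulF A B (emb A B b) (emb A B c)).
Proof.
  intros Hb Hc Hm. apply emb_gammaN; [exact Hm | |].
  - apply gammaN_ext; [| constructor; exact Hm].
    exists b, c; auto using emb_refl.
  - intros x _ (x1 & x2 & H1 & H2 & ->).
    apply emb_iff in H1; apply emb_iff in H2; auto. apply mul_mono; tauto.
Qed.

Lemma emb_ldiv b c : B b -> B c -> B (ldiv A b c) ->
  seteq A (emb A B (ldiv A b c)) (ldivF A B (emb A B b) (emb A B c)).
Proof.
  intros Hb Hc Hm g. unfold ldivF. rewrite (emb_iff Hm). split.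
  - intros [HG Hg]. split; [exact HG |]. intros x Hx.
    apply emb_iff in Hx as [Hx Hxb]; auto. apply emb_iff; auto.
    split; [constructor; assumption |].
    eapply le_trans; [apply mul_mono; [exact Hxb | apply le_refl] |].
    apply mul_le_l, Hg.
  - intros [HG Hg]. split; [exact HG |]. apply mul_le_l.
    apply (emb_iff Hc), Hg, emb_refl, Hb.
Qed.

Lemma emb_rdiv b c : B b -> B c -> B (rdiv A b c) ->
  seteq A (emb A B (rdiv A b c)) (rdivF A B (emb A B b) (emb A B c)).
Proof.
  intros Hb Hc Hm g. unfold rdivF. rewrite (emb_iff Hm). split.
  - intros [HG Hg]. split; [exact HG |]. intros x Hx.
    apply emb_iff in Hx as [Hx Hxc]; auto. apply emb_iff; auto.
    split; [constructor; assumption |].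
    eapply le_trans; [apply mul_mono; [apply le_refl | exact Hxc] |].
    apply mul_le_r, Hg.
  - intros [HG Hg]. split; [exact HG |]. apply mul_le_r.
    apply (emb_iff Hb), Hg, emb_refl, Hc.
Qed.

Lemma emb_bang b : B b -> B (bang A b) ->
  seteq A (emb A B (bang A b)) (bangF A B (emb A B b)).
Proof.
  intros Hb Hbb. apply emb_gammaN; [exact Hbb | |].
  - apply gammaN_ext; [| constructor; exact Hbb]. split.
    + apply emb_iff; auto. split; [constructor; exact Hbb | apply bang_defl].
    + constructor; assumption.
  - intros x _ [Hx HK]. apply emb_iff in Hx as [_ Hx]; auto.
    eapply le_trans; [apply inK_le_bang, HK | apply bang_mono, Hx].
Qed.

Lemma emb_one : B (one A) -> seteq A (emb A B (one A)) (oneF A B).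
Proof.
  intro H1. apply emb_gammaN; [exact H1 | |].
  - apply gammaN_ext; [reflexivity | apply inG_one].
  - intros x _ ->. apply le_refl.
Qed.

Lemma emb_isEmbedding : IsEmbedding A B.
Proof.
  exact (conj emb_closed (conj emb_inj (conj emb_meet (conj emb_join
    (conj emb_mul (conj emb_ldiv (conj emb_rdiv (conj emb_bang emb_one)))))))).
Qed.

End Frame.

Theorem mainTheorem8 :
  (forall (A : IRLU) (B : A -> Prop), @IsEmbedding A B) /\
  (forall (A : IRLU) (zero : A) (B : A -> Prop), B zero -> @IsEmbeddingZ A B zero).
Proof.
  split; [exact emb_isEmbedding |].
  intros A z B _. split; [apply emb_isEmbedding | intro g; reflexivity].
Qed.
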